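(* Let $T$ be a complete theory with monster model $\mathcal{U}$, $A\subseteq\mathcal{U}$ small, $r,s\in[0,1]$ with $r+s=1$, $p\in S_x(\mathcal{U})$, and $\nu_1,\nu_2\in\mathfrak{M}_y(\mathcal{U})$ with $\operatorname{supp}(\nu_1)\cap\operatorname{supp}(\nu_2)=\emptyset$. If $\delta_p\geq_{\mathbb{E},A}\nu_1$ and $\delta_p\geq_{\mathbb{E},A}\nu_2$, then $\delta_p\geq_{\mathbb{E},Ab}r\nu_1+s\nu_2$ for some finite tuple $b$ from $\mathcal{U}$. In particular, if $q_1,\dots,q_n\in S_y(\mathcal{U})$ and $p\geq_{D,A}q_i$ for $i=1,\dots,n$, then there is a finite tuple $b$ from $\mathcal{U}$ such that $\delta_p\geq_{\mathbb{E},Ab}\sum_{i=1}^n r_i\delta_{q_i}$ for $r_i\geq0$ with $\sum_{i=1}^n r_i=1$.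
   Context: For $C\subseteq\mathcal{U}$, $\mathcal{L}_x(C)$ is the Boolean algebra of formulas in $x$ with parameters from $C$ modulo $T$, embedded in $\mathcal{L}_{xy}(C)$ via $\varphi(x)\mapsto\varphi(x)\wedge y=y$; $\mathfrak{M}_x(C)$ is the set of finitely additive probability measures on $\mathcal{L}_x(C)$. For $\omega\in\mathfrak{M}_{xy}(C)$, $\pi_x(\omega)(\varphi(x))=\omega(\varphi(x)\wedge y=y)$ (similarly $\pi_y$); $\omega|_D$ is restriction. $\delta_p$ is the Dirac measure of a type $p$. $\operatorname{supp}(\nu)$ is the set of $q\in S_y(\mathcal{U})$ with $\nu(\psi)>0$ for all $\psi\in q$. For small $C$, $\mu\geq_{\mathbb{E},C}\nu$ means there is $\lambda\in\mathfrak{M}_{xy}(C)$ with $\pi_x(\lambda)=\mu|_C$ such that every $\omega\in\mathfrak{M}_{xy}(\mathcal{U})$ with $\omega|_C=\lambda$ and $\pi_x(\omega)=\mu$ satisfies $\pi_y(\omega)=\nu$. $p\geq_{D,A}q$ means there is $r\in S_{xy}(A)$ with $p|_A\subseteq r$ and $p\cup r\vdash q$. $Ab$ denotes $A$ together with the entries of $b$. *)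

From Stdlib Require Fin.
From Stdlib Require Import Reals List Arith ClassicalEpsilon.
Open Scope R_scope.

Record Language := {
  Fsym : Type; Rsym : Type;
  farity : Fsym -> nat; rarity : Rsym -> nat }.

Inductive term (L : Language) : Type :=
| tvar : nat -> term L
| tapp : forall f : Fsym L, (Fin.t (farity L f) -> term L) -> term L.

Inductive formula (L : Language) : Type :=
| Feq : term L -> term L -> formula L
| Frel : forall r : Rsym L, (Fin.t (rarity L r) -> term L) -> formula L
| Fnot : formula L -> formula L
| Fand : formula L -> formula L -> formula L
| Fex : nat -> formula L -> formula L.
Arguments tvar {L} _.
Arguments tapp {L} f _.
Arguments Feq {L} _ _.
Arguments Frel {L} r _.
Arguments Fnot {L} _.
Arguments Fand {L} _ _.
Arguments Fex {L} _ _.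

Fixpoint tvars_in {L : Language} (P : nat -> Prop) (t : term L) : Prop :=
  match t with
  | tvar i => P i
  | tapp f args => forall j, tvars_in P (args j)
  end.

Fixpoint fvs_in {L : Language} (P : nat -> Prop) (phi : formula L) : Prop :=
  match phi with
  | Feq t1 t2 => tvars_in P t1 /\ tvars_in P t2
  | Frel r args => forall j, tvars_in P (args j)
  | Fnot psi => fvs_in P psi
  | Fand a b => fvs_in P a /\ fvs_in P b
  | Fex x psi => fvs_in (fun i => i = x \/ P i) psi
  end.

Definition sentence {L : Language} (phi : formula L) : Prop := fvs_in (fun _ => False) phi.

Record Structure (L : Language) := {
  dom :> Type;
  fint : forall f : Fsym L, (Fin.t (farity L f) -> dom) -> dom;
  rint : forall r : Rsym L, (Fin.t (rarity L r) -> dom) -> Prop;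
  dom_inh : inhabited dom }.
Arguments dom {L} s.
Arguments fint {L} s f _.
Arguments rint {L} s r _.

Definition upd {X : Type} (v : nat -> X) (x : nat) (a : X) : nat -> X :=
  fun i => if Nat.eqb i x then a else v i.

Fixpoint teval {L : Language} (M : Structure L) (v : nat -> M) (t : term L) : M :=
  match t with
  | tvar i => v i
  | tapp f args => fint M f (fun j => teval M v (args j))
  end.

Fixpoint sat {L : Language} (M : Structure L) (v : nat -> M) (phi : formula L) : Prop :=
  match phi with
  | Feq t1 t2 => teval M v t1 = teval M v t2
  | Frel r args => rint M r (fun j => teval M v (args j))
  | Fnot psi => ~ sat M v psi
  | Fand a b => sat M v a /\ sat M v b
  | Fex x psi => exists a : M, sat M (upd v x a) psi
  end.

Definition models {L : Language} (M : Structure L) (T : formula L -> Prop) : Prop :=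
  forall sigma, T sigma -> forall v, sat M v sigma.

Definition complete_theory {L : Language} (T : formula L -> Prop) : Prop :=
  (forall sigma, T sigma -> sentence sigma) /\
  (exists M : Structure L, models M T) /\
  (forall sigma, sentence sigma ->
     (forall M : Structure L, models M T -> forall v, sat M v sigma) \/
     (forall M : Structure L, models M T -> forall v, ~ sat M v sigma)).

(* Points of M^n are represented by valuations a : nat -> M, only a 0..a (n-1)
   matter.  The parameters ps are placed in variables n, n+1, ... *)
Definition env {L : Language} (M : Structure L) (n : nat) (a : nat -> M) (ps : list M) : nat -> M :=
  fun i => if Nat.ltb i n then a i else nth (i - n) ps (a i).

(* D is the set of realisations in M of a formula in n variables with
   parameters from C  (an element of L_x(C), |x| = n, read in M). *)
Definition definable {L : Language} {M : Structure L} (C : M -> Prop) (n : nat)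
  (D : (nat -> M) -> Prop) : Prop :=
  exists (phi : formula L) (ps : list M),
    Forall C ps /\ fvs_in (fun i => (i < n + length ps)%nat) phi /\
    forall a, D a <-> sat M (env M n a ps) phi.

Definition fullset {L : Language} (M : Structure L) : M -> Prop := fun _ => True.

Definition injective_on {X Y : Type} (A : X -> Prop) (f : X -> Y) : Prop :=
  forall a b, A a -> A b -> f a = f b -> a = b.

(* |A| < |K| *)
Definition small {L : Language} {M : Structure L} (K : Type) (A : M -> Prop) : Prop :=
  (exists f : M -> K, injective_on A f) /\
  ~ (exists g : K -> M, (forall k, A (g k)) /\ injective_on (fun _ => True) g).

Definition elementary_on {L : Language} {M : Structure L} (A : M -> Prop) (f : M -> M) : Prop :=
  forall (phi : formula L) (ps : list M), Forall A ps ->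
    fvs_in (fun i => (i < length ps)%nat) phi ->
    forall v : nat -> M,
      (sat M (fun i => nth i ps (v i)) phi <->
       sat M (fun i => nth i (map f ps) (v i)) phi).

Definition automorphism {L : Language} {M : Structure L} (s : M -> M) : Prop :=
  (exists t : M -> M, forall a, t (s a) = a /\ s (t a) = a) /\
  (forall f args, s (fint M f args) = fint M f (fun j => s (args j))) /\
  (forall r args, rint M r args <-> rint M r (fun j => s (args j))).

(* U is a monster model of the complete theory T: a model of T which is
   kappa-saturated and strongly kappa-homogeneous, where kappa = |K| > |L| + aleph_0;
   "small" means of cardinality < kappa. *)
Definition monster {L : Language} (T : formula L -> Prop) (U : Structure L) (K : Type) : Prop :=
  complete_theory T /\ models U T /\
  (exists f : (Fsym L + Rsym L + nat)%type -> K, injective_on (fun _ => True) f) /\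
  ~ (exists g : K -> (Fsym L + Rsym L + nat)%type, injective_on (fun _ => True) g) /\
  (forall A : U -> Prop, small K A ->
     forall Sigma : ((nat -> U) -> Prop) -> Prop,
       (forall D, Sigma D -> definable A 1 D) ->
       (forall l, Forall Sigma l -> exists a, Forall (fun D => D a) l) ->
       exists a, forall D, Sigma D -> D a) /\
  (forall (A : U -> Prop) (f : U -> U), small K A -> elementary_on A f ->
     exists s, automorphism s /\ forall a, A a -> s a = f a).

(* complete type over C in n variables = ultrafilter of L_x(C) *)
Definition is_type {L : Language} {M : Structure L} (C : M -> Prop) (n : nat)
  (p : ((nat -> M) -> Prop) -> Prop) : Prop :=
  (forall D, p D -> definable C n D) /\
  p (fun _ => True) /\
  (forall D, p D -> exists a, D a) /\
  (forall D E, p D -> p E -> p (fun a => D a /\ E a)) /\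
  (forall D E, p D -> definable C n E -> (forall a, D a -> E a) -> p E) /\
  (forall D, definable C n D -> p D \/ p (fun a => ~ D a)).

Definition is_measure {L : Language} {M : Structure L} (C : M -> Prop) (n : nat)
  (mu : ((nat -> M) -> Prop) -> R) : Prop :=
  (forall D, definable C n D -> 0 <= mu D) /\
  mu (fun _ => True) = 1 /\
  (forall D E, definable C n D -> definable C n E ->
     (forall a, D a -> E a -> False) ->
     mu (fun a => D a \/ E a) = mu D + mu E) /\
  (forall D E, definable C n D -> (forall a, D a <-> E a) -> mu D = mu E).

Definition meas_eq_on {L : Language} {M : Structure L} (C : M -> Prop) (n : nat)
  (mu nu : ((nat -> M) -> Prop) -> R) : Prop :=
  forall D, definable C n D -> mu D = nu D.

(* a set in the y-variables (|x| = n) read as a set in the xy-variables *)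
Definition shift {X : Type} (n : nat) (E : (nat -> X) -> Prop) : (nat -> X) -> Prop :=
  fun v => E (fun i => v (n + i)%nat).

Definition pi_y {X : Type} (n : nat) (om : ((nat -> X) -> Prop) -> R) :
  ((nat -> X) -> Prop) -> R := fun E => om (shift n E).

Definition dirac {X : Type} (p : ((nat -> X) -> Prop) -> Prop) :
  ((nat -> X) -> Prop) -> R :=
  fun D => if excluded_middle_informative (p D) then 1 else 0.

Definition in_supp {L : Language} {M : Structure L} (m : nat) (nu : ((nat -> M) -> Prop) -> R)
  (q : ((nat -> M) -> Prop) -> Prop) : Prop :=
  is_type (fullset M) m q /\ forall D, q D -> 0 < nu D.

(* mu >=_{E,C} nu, with mu in M_x(U) (|x| = n), nu in M_y(U) (|y| = m).
   pi_x(lambda) on L_x(C) is lambda applied to the same set (phi(x) /\ y = y). *)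
Definition E_ge {L : Language} {M : Structure L} (C : M -> Prop) (n m : nat)
  (mu nu : ((nat -> M) -> Prop) -> R) : Prop :=
  exists lam : ((nat -> M) -> Prop) -> R,
    is_measure C (n + m) lam /\ meas_eq_on C n lam mu /\
    forall om, is_measure (fullset M) (n + m) om ->
      meas_eq_on C (n + m) om lam ->
      meas_eq_on (fullset M) n om mu ->
      meas_eq_on (fullset M) m (pi_y n om) nu.

(* p >=_{D,A} q : some r in S_xy(A) with p|_A subset r and p u r |- q
   (|- unfolded via compactness: each psi(y) in q is implied in U by some
   phi(x) in p together with some chi(x,y) in r). *)
Definition D_ge {L : Language} {M : Structure L} (A : M -> Prop) (n m : nat)
  (p q : ((nat -> M) -> Prop) -> Prop) : Prop :=
  exists r, is_type A (n + m) r /\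
    (forall D, definable A n D -> p D -> r D) /\
    (forall E, q E -> exists D F, p D /\ r F /\
        forall v, D v -> F v -> shift n E v).

Fixpoint sumR (k : nat) (f : nat -> R) : R :=
  match k with O => 0 | S k' => sumR k' f + f k' end.

(* Disjoint supports give a formula th(y, b) with nu1(th) = 1 and nu2(th) = 0.  If omega_i
   extends both the witness lambda_i of delta_p >= nu_i and delta_p, the witness for the mixture
   is r omega_1 + s omega_2 restricted to L(Ab): any omega extending it and delta_p gives th(y, b)
   measure r, and conditioning omega on th(y, b) and on its negation yields such extensions of
   lambda_1 and lambda_2, whence pi_y(omega) = r nu1 + s nu2.  If some lambda_i has no such
   extension, it witnesses delta_p >= nu for every nu, vacuously.
   For the second statement, p >=_D q makes any joint extension of delta_r and delta_p a witness
   of delta_p >= delta_q over every parameter set containing A, and the finite mixture is built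
   one type at a time. *)

From Stdlib Require Import Reals List Lia Lra Classical ClassicalEpsilon FunctionalExtensionality.
From mathcomp Require filter.
Open Scope R_scope.

Section Syntax.
Context {L : Language}.

Fixpoint trename (f : nat -> nat) (t : term L) : term L :=
  match t with
  | tvar i => tvar (f i)
  | tapp g args => tapp g (fun j => trename f (args j))
  end.

Fixpoint frename (f : nat -> nat) (phi : formula L) : formula L :=
  match phi with
  | Feq t1 t2 => Feq (trename f t1) (trename f t2)
  | Frel r args => Frel r (fun j => trename f (args j))
  | Fnot psi => Fnot (frename f psi)
  | Fand a b => Fand (frename f a) (frename f b)
  | Fex x psi => Fex (f x) (frename f psi)
  end.

Lemma tvars_in_mono (P Q : nat -> Prop) (t : term L) :
  (forall i, P i -> Q i) -> tvars_in P t -> tvars_in Q t.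
Proof. intros HPQ; induction t; simpl; auto. Qed.

Lemma fvs_in_mono (phi : formula L) : forall P Q : nat -> Prop,
  (forall i, P i -> Q i) -> fvs_in P phi -> fvs_in Q phi.
Proof.
  induction phi; simpl; intros P Q HPQ H.
  - destruct H; split; eapply tvars_in_mono; eauto.
  - intros j; eapply tvars_in_mono; eauto.
  - eauto.
  - destruct H; split; eauto.
  - eapply IHphi; [|exact H]. intros i [Hi|Hi]; auto.
Qed.

Lemma tvars_in_rename (f : nat -> nat) (P Q : nat -> Prop) (t : term L) :
  (forall i, P i -> Q (f i)) -> tvars_in P t -> tvars_in Q (trename f t).
Proof. intros HPQ; induction t; simpl; auto. Qed.

Lemma fvs_in_rename (f : nat -> nat) (phi : formula L) : forall P Q : nat -> Prop,
  (forall i, P i -> Q (f i)) -> fvs_in P phi -> fvs_in Q (frename f phi).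
Proof.
  induction phi; simpl; intros P Q HPQ H.
  - destruct H; split; eapply tvars_in_rename; eauto.
  - intros j; eapply tvars_in_rename; eauto.
  - eauto.
  - destruct H; split; eauto.
  - eapply IHphi; [|exact H]. intros i [->|Hi]; auto.
Qed.

Context (M : Structure L).

Lemma teval_agree (P : nat -> Prop) (v w : nat -> M) (t : term L) :
  tvars_in P t -> (forall i, P i -> v i = w i) -> teval M v t = teval M w t.
Proof.
  intros Ht Hvw; induction t; simpl in *; auto.
  f_equal. apply functional_extensionality; auto.
Qed.

Lemma sat_agree (phi : formula L) : forall (P : nat -> Prop) (v w : nat -> M),
  fvs_in P phi -> (forall i, P i -> v i = w i) -> (sat M v phi <-> sat M w phi).
Proof.
  induction phi; simpl; intros P v w Hf Hvw.
  - destruct Hf. erewrite !(teval_agree P v w) by eauto. reflexivity.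
  - replace (fun j => teval M v (t j)) with (fun j => teval M w (t j)); [tauto|].
    apply functional_extensionality; intros j; symmetry; eapply teval_agree; eauto.
  - rewrite (IHphi P v w); tauto.
  - destruct Hf. rewrite (IHphi1 P v w), (IHphi2 P v w); tauto.
  - assert (Hupd : forall a, sat M (upd v n a) phi <-> sat M (upd w n a) phi).
    { intros a; apply (IHphi _ _ _ Hf). intros i Hi; unfold upd.
      destruct (Nat.eqb_spec i n); [reflexivity|]. destruct Hi; [contradiction|auto]. }
    split; intros [a Ha]; exists a; apply Hupd; auto.
Qed.

Lemma teval_rename (f : nat -> nat) (v : nat -> M) (t : term L) :
  teval M v (trename f t) = teval M (fun i => v (f i)) t.
Proof. induction t; simpl; auto. f_equal. apply functional_extensionality; auto. Qed.

Lemma sat_rename (f : nat -> nat) (phi : formula L) :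
  (forall i j, f i = f j -> i = j) ->
  forall v : nat -> M, sat M v (frename f phi) <-> sat M (fun i => v (f i)) phi.
Proof.
  intros finj; induction phi; simpl; intros v.
  - rewrite !teval_rename. reflexivity.
  - replace (fun j => teval M v (trename f (t j)))
      with (fun j => teval M (fun i => v (f i)) (t j)); [reflexivity|].
    apply functional_extensionality; intros j; rewrite teval_rename; auto.
  - rewrite IHphi. reflexivity.
  - rewrite IHphi1, IHphi2. reflexivity.
  - assert (Hupd : forall a, (fun i => upd v (f n) a (f i)) = upd (fun i => v (f i)) n a).
    { intros a; apply functional_extensionality; intros i; unfold upd.
      destruct (Nat.eqb_spec (f i) (f n)), (Nat.eqb_spec i n); subst;
        first [reflexivity | exfalso; eauto | congruence]. }
    split; intros [a Ha]; exists a.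
    + rewrite IHphi, Hupd in Ha. exact Ha.
    + rewrite IHphi, Hupd. exact Ha.
Qed.

End Syntax.

Section Definable.
Context {L : Language} {U : Structure L}.

Lemma env_lt n a ps i : (i < n)%nat -> env U n a ps i = a i.
Proof. intros H; unfold env; destruct (Nat.ltb_spec i n); auto; lia. Qed.

Lemma env_ge n a ps i : (n <= i)%nat -> env U n a ps i = nth (i - n) ps (a i).
Proof. intros H; unfold env; destruct (Nat.ltb_spec i n); auto; lia. Qed.

Lemma definable_mono {C C' : U -> Prop} {k D} :
  (forall u, C u -> C' u) -> definable C k D -> definable C' k D.
Proof.
  intros H [phi [ps [HF [Hv Hs]]]]. exists phi, ps. split; [|split]; auto.
  eapply Forall_impl; eauto.
Qed.

Lemma definable_full {C : U -> Prop} {k D} : definable C k D -> definable (fullset U) k D.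
Proof. apply definable_mono. intros; exact I. Qed.

Lemma definable_over_params (C : U -> Prop) k D :
  definable (fullset U) k D -> exists b, definable (fun u => C u \/ In u b) k D.
Proof.
  intros [phi [ps [_ [Hv Hs]]]]. exists ps, phi, ps. split; [|split]; auto.
  apply Forall_forall; intros; right; auto.
Qed.

Lemma definable_ext {C : U -> Prop} {k D E} :
  definable C k D -> (forall a, D a <-> E a) -> definable C k E.
Proof.
  intros [phi [ps [HF [Hv Hs]]]] H. exists phi, ps. split; [|split]; auto.
  intros a. rewrite <- H. auto.
Qed.

Lemma definable_not {C : U -> Prop} {k D} : definable C k D -> definable C k (fun a => ~ D a).
Proof.
  intros [phi [ps [HF [Hv Hs]]]]. exists (Fnot phi), ps. split; [|split]; auto.
  intros a. simpl. rewrite Hs. reflexivity.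
Qed.

Lemma definable_true (C : U -> Prop) k : definable C k (fun _ => True).
Proof.
  destruct (dom_inh _ U) as [u].
  exists (Fex 0 (Feq (tvar 0) (tvar 0))), nil. split; [|split]; simpl; auto.
  intros a. split; auto. intros _. exists u. auto.
Qed.

Lemma definable_false (C : U -> Prop) k : definable C k (fun _ => False).
Proof. eapply definable_ext; [exact (definable_not (definable_true C k))|]. cbv beta; tauto. Qed.

(* The parameters of the second conjunct are moved past those of the first. *)
Lemma definable_and {C : U -> Prop} {k D E} :
  definable C k D -> definable C k E -> definable C k (fun a => D a /\ E a).
Proof.
  intros [phi1 [ps1 [HF1 [Hv1 Hs1]]]] [phi2 [ps2 [HF2 [Hv2 Hs2]]]].
  set (f := fun i => if Nat.ltb i k then i else (i + length ps1)%nat).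
  assert (finj : forall i j, f i = f j -> i = j).
  { intros i j; unfold f; destruct (Nat.ltb_spec i k), (Nat.ltb_spec j k); lia. }
  exists (Fand phi1 (frename f phi2)), (ps1 ++ ps2). split; [|split].
  - apply Forall_app; auto.
  - simpl. rewrite length_app. split.
    + eapply fvs_in_mono; [|exact Hv1]. intros i Hi; simpl in *; lia.
    + eapply fvs_in_rename; [|exact Hv2]. intros i Hi; simpl in *; unfold f.
      destruct (Nat.ltb_spec i k); lia.
  - intros a.
    assert (E1 : forall i, (i < k + length ps1)%nat ->
                 env U k a ps1 i = env U k a (ps1 ++ ps2) i).
    { intros i Hi. destruct (Nat.lt_ge_cases i k); [rewrite !env_lt; auto|].
      rewrite !env_ge, app_nth1; auto; lia. }
    assert (E2 : forall i, (i < k + length ps2)%nat ->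
                 env U k a ps2 i = env U k a (ps1 ++ ps2) (f i)).
    { intros i Hi. unfold f. destruct (Nat.ltb_spec i k); [rewrite !env_lt; auto|].
      rewrite !env_ge, app_nth2 by lia.
      replace (i + length ps1 - k - length ps1)%nat with (i - k)%nat by lia.
      apply nth_indep. lia. }
    simpl. rewrite Hs1, Hs2, sat_rename by auto.
    rewrite (sat_agree U phi1 _ _ _ Hv1 E1), (sat_agree U phi2 _ _ _ Hv2 E2). reflexivity.
Qed.

Lemma definable_or {C : U -> Prop} {k D E} :
  definable C k D -> definable C k E -> definable C k (fun a => D a \/ E a).
Proof.
  intros HD HE.
  eapply definable_ext.
  - exact (definable_not (definable_and (definable_not HD) (definable_not HE))).
  - intros a; cbv beta. tauto.
Qed.

Lemma definable_lift {C : U -> Prop} {n} (m : nat) {D} : definable C n D -> definable C (n + m) D.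
Proof.
  intros [phi [ps [HF [Hv Hs]]]].
  set (f := fun i => if Nat.ltb i n then i else (i + m)%nat).
  assert (finj : forall i j, f i = f j -> i = j).
  { intros i j; unfold f; destruct (Nat.ltb_spec i n), (Nat.ltb_spec j n); lia. }
  exists (frename f phi), ps. split; [|split]; auto.
  - eapply fvs_in_rename; [|exact Hv].
    intros i Hi; simpl in *; unfold f; destruct (Nat.ltb_spec i n); lia.
  - intros a. rewrite Hs, sat_rename by auto.
    apply (sat_agree U phi _ _ _ Hv). intros i Hi. unfold f.
    destruct (Nat.ltb_spec i n); [rewrite !env_lt; auto; lia|].
    rewrite !env_ge by lia.
    replace (i + m - (n + m))%nat with (i - n)%nat by lia. apply nth_indep. lia.
Qed.

Lemma definable_shift {C : U -> Prop} (n : nat) {m E} :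
  definable C m E -> definable C (n + m) (shift n E).
Proof.
  intros [phi [ps [HF [Hv Hs]]]].
  exists (frename (fun i => (n + i)%nat) phi), ps. split; [|split]; auto.
  - eapply fvs_in_rename; [|exact Hv]. intros i Hi; simpl in *; lia.
  - intros a. unfold shift. rewrite Hs, sat_rename by (intros; lia).
    apply (sat_agree U phi _ _ _ Hv). intros i Hi.
    destruct (Nat.lt_ge_cases i m); [rewrite !env_lt; auto; lia|].
    rewrite !env_ge by lia.
    replace (n + i - (n + m))%nat with (i - m)%nat by lia. reflexivity.
Qed.

End Definable.

Section Measure.
Context {L : Language} {U : Structure L}.

Section Laws.
Context {C : U -> Prop} {k : nat} {mu : ((nat -> U) -> Prop) -> R}.
Hypothesis Hmu : is_measure C k mu.

Lemma measure_ge0 D : definable C k D -> 0 <= mu D.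
Proof. apply Hmu. Qed.

Lemma measure_T : mu (fun _ => True) = 1.
Proof. apply Hmu. Qed.

Lemma measure_add D E : definable C k D -> definable C k E ->
  (forall a, D a -> E a -> False) -> mu (fun a => D a \/ E a) = mu D + mu E.
Proof. apply Hmu. Qed.

Lemma measure_ext D E : definable C k D -> (forall a, D a <-> E a) -> mu D = mu E.
Proof. apply Hmu. Qed.

Lemma measure_andC D E : definable C k D -> definable C k E ->
  mu (fun a => D a /\ E a) = mu (fun a => E a /\ D a).
Proof. intros HD HE. apply measure_ext; [apply definable_and; auto|tauto]. Qed.

Lemma measure_split D Y : definable C k D -> definable C k Y ->
  mu D = mu (fun a => D a /\ Y a) + mu (fun a => D a /\ ~ Y a).
Proof.
  intros HD HY. rewrite <- measure_add.
  - apply measure_ext; auto. intros a. tauto.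
  - apply definable_and; auto.
  - apply definable_and, definable_not; auto.
  - tauto.
Qed.

Lemma measure_compl D : definable C k D -> mu (fun a => ~ D a) = 1 - mu D.
Proof.
  intros HD. rewrite <- measure_T, (measure_split (fun _ => True) D); [|apply definable_true|auto].
  rewrite (measure_ext (fun a => True /\ D a) D),
    (measure_ext (fun a => True /\ ~ D a) (fun a => ~ D a)).
  - ring.
  - apply definable_and; [apply definable_true|apply definable_not; auto].
  - tauto.
  - apply definable_and; [apply definable_true|auto].
  - tauto.
Qed.

Lemma measure_mono D E : definable C k D -> definable C k E ->
  (forall a, D a -> E a) -> mu D <= mu E.
Proof.
  intros HD HE H. rewrite (measure_split E D), (measure_ext (fun a => E a /\ D a) D); auto.
  - assert (0 <= mu (fun a => E a /\ ~ D a))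
      by (apply measure_ge0, definable_and, definable_not; auto).
    lra.
  - apply definable_and; auto.
  - intros a; split; [tauto|auto].
Qed.

Lemma measure_le1 D : definable C k D -> mu D <= 1.
Proof. intros HD. rewrite <- measure_T. apply measure_mono; auto. apply definable_true. Qed.

Lemma measure_and_full D Y : definable C k D -> definable C k Y -> mu Y = 1 ->
  mu (fun a => D a /\ Y a) = mu D.
Proof.
  intros HD HY H1. rewrite (measure_split D Y); auto.
  assert (mu (fun a => D a /\ ~ Y a) <= mu (fun a => ~ Y a))
    by (apply measure_mono; [apply definable_and|..]; try apply definable_not; auto; tauto).
  assert (0 <= mu (fun a => D a /\ ~ Y a))
    by (apply measure_ge0, definable_and, definable_not; auto).
  rewrite measure_compl in H; auto. lra.
Qed.

Lemma measure_and_null D Y : definable C k D -> definable C k Y -> mu Y = 0 ->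
  mu (fun a => D a /\ Y a) = 0.
Proof.
  intros HD HY H0.
  assert (mu (fun a => D a /\ Y a) <= mu Y)
    by (apply measure_mono; [apply definable_and|..]; auto; tauto).
  assert (0 <= mu (fun a => D a /\ Y a)) by (apply measure_ge0, definable_and; auto).
  lra.
Qed.

Lemma measure_full_of_and D F E : definable C k D -> definable C k F -> definable C k E ->
  mu D = 1 -> mu F = 1 -> (forall a, D a -> F a -> E a) -> mu E = 1.
Proof.
  intros HD HF HE H1 H2 HDFE.
  assert (mu (fun a => D a /\ F a) <= mu E)
    by (apply measure_mono; [apply definable_and|..]; auto; intros a []; auto).
  rewrite measure_and_full in H by auto.
  pose proof (measure_le1 E HE). lra.
Qed.

End Laws.

Lemma measure_of_full (C : U -> Prop) k mu : is_measure (fullset U) k mu -> is_measure C k mu.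
Proof.
  intros [H1 [H2 [H3 H4]]]. split; [|split; [|split]]; auto.
  - intros D HD; apply H1, (definable_full HD).
  - intros D E HD HE; apply H3; eapply definable_full; eauto.
  - intros D E HD; apply H4; eapply definable_full; eauto.
Qed.

Lemma measure_mixture (C : U -> Prop) k mu1 mu2 r s :
  is_measure C k mu1 -> is_measure C k mu2 -> 0 <= r -> 0 <= s -> r + s = 1 ->
  is_measure C k (fun X => r * mu1 X + s * mu2 X).
Proof.
  intros [A1 [A2 [A3 A4]]] [B1 [B2 [B3 B4]]] Hr Hs Hrs. split; [|split; [|split]].
  - intros D HD. specialize (A1 D HD). specialize (B1 D HD). nra.
  - rewrite A2, B2. lra.
  - intros D E HD HE Hd. rewrite A3, B3; auto. ring.
  - intros D E HD HDE. rewrite (A4 D E), (B4 D E); auto.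
Qed.

Definition cond_measure (om : ((nat -> U) -> Prop) -> R) (Y : (nat -> U) -> Prop) (c : R) :
  ((nat -> U) -> Prop) -> R := fun X => om (fun a => X a /\ Y a) / c.

Lemma measure_cond k om Y : is_measure (fullset U) k om -> definable (fullset U) k Y ->
  0 < om Y -> is_measure (fullset U) k (cond_measure om Y (om Y)).
Proof.
  intros Hom HY Hc. unfold cond_measure. split; [|split; [|split]].
  - intros D HD. apply Rmult_le_pos; [|left; apply Rinv_0_lt_compat; auto].
    apply (measure_ge0 Hom), definable_and; auto.
  - rewrite (measure_ext Hom _ Y); [field; lra| |tauto].
    apply definable_and; [apply definable_true|auto].
  - intros D E HD HE Hd.
    rewrite (measure_ext Hom _ (fun a => (D a /\ Y a) \/ (E a /\ Y a))).
    + rewrite (measure_add Hom); [field; lra|apply definable_and; auto..|].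
      intros a [? ?] [? ?]; eauto.
    + apply definable_and; auto. apply definable_or; auto.
    + intros a; tauto.
  - intros D E HD HDE. f_equal. apply (measure_ext Hom). apply definable_and; auto.
    intros a; rewrite HDE; tauto.
Qed.

Lemma dirac_in (p : ((nat -> U) -> Prop) -> Prop) D : p D -> dirac p D = 1.
Proof. intros H; unfold dirac; destruct (excluded_middle_informative (p D)); tauto. Qed.

Lemma dirac_notin (p : ((nat -> U) -> Prop) -> Prop) D : ~ p D -> dirac p D = 0.
Proof. intros H; unfold dirac; destruct (excluded_middle_informative (p D)); tauto. Qed.

Lemma dirac_bounds (p : ((nat -> U) -> Prop) -> Prop) D : 0 <= dirac p D <= 1.
Proof. unfold dirac; destruct (excluded_middle_informative (p D)); lra. Qed.

Lemma type_consistent {C : U -> Prop} {k q D} : is_type C k q -> q D -> ~ q (fun a => ~ D a).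
Proof.
  intros [_ [_ [T3 [T4 _]]]] qD qnD. destruct (T3 _ (T4 _ _ qD qnD)) as [a [Ha1 Ha2]]. auto.
Qed.

Lemma type_measure (C : U -> Prop) k q : is_type C k q -> is_measure C k (dirac q).
Proof.
  intros [T1 [T2 [T3 [T4 [T5 T6]]]]]. split; [|split; [|split]].
  - intros D _. apply dirac_bounds.
  - apply dirac_in; auto.
  - intros D E HD HE Hd.
    assert (HDE : definable C k (fun a => D a \/ E a)) by (apply definable_or; auto).
    destruct (classic (q D)) as [qD|nqD], (classic (q E)) as [qE|nqE].
    + destruct (T3 _ (T4 _ _ qD qE)) as [a [Ha1 Ha2]]. exfalso; eauto.
    + rewrite (dirac_in q (fun a => D a \/ E a)), (dirac_in q D), (dirac_notin q E); auto.
      * ring.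
      * apply (T5 D); auto.
    + rewrite (dirac_in q (fun a => D a \/ E a)), (dirac_notin q D), (dirac_in q E); auto.
      * ring.
      * apply (T5 E); auto.
    + rewrite !dirac_notin; auto; [ring|]. intros qDE.
      destruct (T6 D HD) as [|qnD]; [contradiction|].
      destruct (T6 E HE) as [|qnE]; [contradiction|].
      destruct (T3 _ (T4 _ _ qDE (T4 _ _ qnD qnE))) as [a [[Ha|Ha] [Hb Hc]]]; auto.
  - intros D E HD HDE. assert (HE : definable C k E) by (eapply definable_ext; eauto).
    destruct (classic (q D)) as [qD|nqD].
    + rewrite !dirac_in; auto. apply (T5 D); auto. apply HDE.
    + rewrite !dirac_notin; auto. intros qE. apply nqD, (T5 E); auto. apply HDE.
Qed.

End Measure.

Section Extension.
Context {L : Language} {U : Structure L}.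

Definition joint_extension (C : U -> Prop) (n m : nat)
  (lam mu om : ((nat -> U) -> Prop) -> R) : Prop :=
  is_measure (fullset U) (n + m) om /\ meas_eq_on C (n + m) om lam /\
  meas_eq_on (fullset U) n om mu.

Definition E_witness (C : U -> Prop) (n m : nat) (mu nu lam : ((nat -> U) -> Prop) -> R) : Prop :=
  is_measure C (n + m) lam /\ meas_eq_on C n lam mu /\
  forall om, joint_extension C n m lam mu om -> meas_eq_on (fullset U) m (pi_y n om) nu.

Lemma E_ge_witness C n m mu nu : E_ge C n m mu nu <-> exists lam, E_witness C n m mu nu lam.
Proof.
  split; intros [lam [Hl [Hlm HP]]]; exists lam; split; auto; split; auto.
  - intros om [Hom [He Hm]]. auto.
  - intros om Hom He Hm. apply HP. split; auto.
Qed.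

Lemma E_ge_params_ext (C C' : U -> Prop) n m mu nu :
  (forall u, C u <-> C' u) -> E_ge C n m mu nu -> E_ge C' n m mu nu.
Proof.
  intros HC [lam [[A1 [A2 [A3 A4]]] [Hp HP]]].
  assert (HCC : forall k D, definable C' k D -> definable C k D)
    by (intros k D; apply definable_mono; intros u; apply HC).
  exists lam. split; [|split].
  - split; [|split; [|split]]; auto.
  - intros D HD; auto.
  - intros om Hom Hext Hm. apply HP; auto.
    intros D HD; apply Hext. eapply definable_mono; [|exact HD]. intros u; apply HC.
Qed.

Lemma E_ge_target_ext (C : U -> Prop) n m mu nu nu' :
  meas_eq_on (fullset U) m nu nu' -> E_ge C n m mu nu -> E_ge C n m mu nu'.
Proof.
  intros H [lam [Hl [Hp HP]]]. exists lam. split; [|split]; auto.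
  intros om Hom Hext Hm D HD. rewrite <- H; auto. apply HP; auto.
Qed.

Lemma E_ge_of_no_extension (C : U -> Prop) n m mu nu lam :
  is_measure C (n + m) lam -> meas_eq_on C n lam mu ->
  ~ (exists om, joint_extension C n m lam mu om) -> E_ge C n m mu nu.
Proof.
  intros Hl Hlm Hno. exists lam. split; [|split]; auto.
  intros om Hom Hext Hm. exfalso. apply Hno. exists om. split; auto.
Qed.

Lemma cond_dirac n m om p Y :
  is_measure (fullset U) (n + m) om -> definable (fullset U) (n + m) Y -> 0 < om Y ->
  meas_eq_on (fullset U) n om (dirac p) ->
  meas_eq_on (fullset U) n (cond_measure om Y (om Y)) (dirac p).
Proof.
  intros Hom HY HYpos Hm D HD. unfold cond_measure.
  pose proof (definable_lift m HD) as HDl.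
  rewrite (measure_andC Hom) by auto.
  destruct (classic (p D)) as [pD|npD].
  - rewrite dirac_in, (measure_and_full Hom); auto.
    + field. lra.
    + rewrite Hm by auto. apply dirac_in; auto.
  - rewrite dirac_notin, (measure_and_null Hom); auto.
    + unfold Rdiv; ring.
    + rewrite Hm by auto. apply dirac_notin; auto.
Qed.

Lemma cond_mixture (C C' : U -> Prop) n m p lam1 om1 om2 r s Y om :
  (forall u, C u -> C' u) -> 0 < r ->
  joint_extension C n m lam1 (dirac p) om1 -> is_measure (fullset U) (n + m) om2 ->
  definable C' (n + m) Y -> om1 Y = 1 -> om2 Y = 0 ->
  joint_extension C' n m (fun X => r * om1 X + s * om2 X) (dirac p) om ->
  joint_extension C n m lam1 (dirac p) (cond_measure om Y (om Y)).
Proof.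
  intros HCC' Hr [Hom1 [Hl1 _]] Hom2 HY H1 H0 [Hom [Hext Hm]].
  assert (HYf : definable (fullset U) (n + m) Y) by exact (definable_full HY).
  assert (HomY : om Y = r) by (rewrite Hext, H1, H0 by auto; ring).
  split; [|split].
  - apply measure_cond; auto. lra.
  - intros X HX. unfold cond_measure.
    assert (HXC' : definable C' (n + m) X) by exact (definable_mono HCC' HX).
    assert (HXf : definable (fullset U) (n + m) X) by exact (definable_full HX).
    rewrite Hext by (apply definable_and; auto).
    rewrite (measure_and_full Hom1), (measure_and_null Hom2), HomY, Hl1 by auto.
    field. lra.
  - apply (cond_dirac n m); auto. lra.
Qed.

Section Mixture.
Variables (C C' : U -> Prop) (n m : nat) (p : ((nat -> U) -> Prop) -> Prop).
Variables (nu1 nu2 lam1 lam2 om1 om2 : ((nat -> U) -> Prop) -> R) (r s : R).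
Variable th : (nat -> U) -> Prop.
Hypotheses (HCC' : forall u, C u -> C' u) (Hr : 0 < r) (Hs : 0 < s) (Hrs : r + s = 1).
Hypotheses (Hth : definable C' m th) (Hth1 : nu1 th = 1) (Hth2 : nu2 th = 0).
Hypotheses (Hlam1 : E_witness C n m (dirac p) nu1 lam1)
           (Hlam2 : E_witness C n m (dirac p) nu2 lam2).
Hypotheses (Hom1 : joint_extension C n m lam1 (dirac p) om1)
           (Hom2 : joint_extension C n m lam2 (dirac p) om2).

Let mix := fun X => r * om1 X + s * om2 X.
Let Th := shift n th.

Lemma mixture_separator_values : om1 Th = 1 /\ om2 Th = 0.
Proof.
  destruct Hlam1 as [_ [_ HP1]], Hlam2 as [_ [_ HP2]].
  pose proof (definable_full Hth) as Hthf.
  split; [rewrite <- Hth1; exact (HP1 _ Hom1 th Hthf)|rewrite <- Hth2; exact (HP2 _ Hom2 th Hthf)].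
Qed.

Lemma mixture_witness : E_witness C' n m (dirac p) (fun D => r * nu1 D + s * nu2 D) mix.
Proof.
  destruct Hlam1 as [_ [_ HP1]], Hlam2 as [_ [_ HP2]].
  pose proof Hom1 as [Hm1 [_ Hp1]]. pose proof Hom2 as [Hm2 [_ Hp2]].
  destruct mixture_separator_values as [Hom1Th Hom2Th].
  assert (HTh : definable C' (n + m) Th) by exact (definable_shift n Hth).
  assert (HThf : definable (fullset U) (n + m) Th) by exact (definable_full HTh).
  assert (HnTh : definable C' (n + m) (fun a => ~ Th a)) by exact (definable_not HTh).
  split; [|split].
  - apply measure_mixture; try apply measure_of_full; auto; lra.
  - intros D HD. unfold mix. rewrite Hp1, Hp2 by exact (definable_full HD).
    rewrite <- Rmult_plus_distr_r, Hrs. ring.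
  - intros om Hext E HE.
    pose proof Hext as [Hom [Hmix _]].
    assert (J1 := cond_mixture C C' n m p lam1 om1 om2 r s Th om
                    HCC' Hr Hom1 Hm2 HTh Hom1Th Hom2Th Hext).
    assert (J2 : joint_extension C n m lam2 (dirac p)
                   (cond_measure om (fun a => ~ Th a) (om (fun a => ~ Th a)))).
    { apply (cond_mixture C C' n m p lam2 om2 om1 s r _ om HCC' Hs Hom2 Hm1 HnTh).
      - rewrite (measure_compl Hm2), Hom2Th by auto. ring.
      - rewrite (measure_compl Hm1), Hom1Th by auto. ring.
      - destruct Hext as [? [Hext' ?]]. split; [|split]; auto.
        intros X HX. rewrite Hext' by auto. unfold mix. ring. }
    assert (R1 := HP1 _ J1 E HE). assert (R2 := HP2 _ J2 E HE).
    unfold pi_y, cond_measure in R1, R2 |- *.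
    assert (HomTh : om Th = r) by (rewrite Hmix by auto; unfold mix; rewrite Hom1Th, Hom2Th; ring).
    assert (HomnTh : om (fun a => ~ Th a) = s) by (rewrite (measure_compl Hom) by auto; lra).
    rewrite HomTh in R1. rewrite HomnTh in R2.
    rewrite (measure_split Hom (shift n E) Th) by (auto; apply definable_shift; auto).
    rewrite <- R1, <- R2. field. lra.
Qed.

End Mixture.

Lemma E_ge_mixture (C : U -> Prop) n m p nu1 nu2 r s th :
  0 <= r -> 0 <= s -> r + s = 1 ->
  definable (fullset U) m th -> nu1 th = 1 -> nu2 th = 0 ->
  E_ge C n m (dirac p) nu1 -> E_ge C n m (dirac p) nu2 ->
  exists b, E_ge (fun u => C u \/ In u b) n m (dirac p) (fun D => r * nu1 D + s * nu2 D).
Proof.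
  intros Hr Hs Hrs Hth Hth1 Hth2 HE1 HE2.
  assert (Hnil : forall nu, E_ge C n m (dirac p) nu ->
                   E_ge (fun u => C u \/ In u nil) n m (dirac p) nu)
    by (intros nu; apply E_ge_params_ext; simpl; tauto).
  destruct (Req_dec r 0) as [r0|rpos].
  { exists nil. apply Hnil. eapply E_ge_target_ext; [|exact HE2].
    intros D _. rewrite r0. replace s with 1 by lra. ring. }
  destruct (Req_dec s 0) as [s0|spos].
  { exists nil. apply Hnil. eapply E_ge_target_ext; [|exact HE1].
    intros D _. rewrite s0. replace r with 1 by lra. ring. }
  apply E_ge_witness in HE1 as [lam1 Hlam1], HE2 as [lam2 Hlam2].
  destruct (classic (exists om, joint_extension C n m lam1 (dirac p) om)) as [[om1 Hom1]|N1].
  2:{ exists nil. apply Hnil. destruct Hlam1 as [Hl [Hlp _]]. eapply E_ge_of_no_extension; eauto. }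
  destruct (classic (exists om, joint_extension C n m lam2 (dirac p) om)) as [[om2 Hom2]|N2].
  2:{ exists nil. apply Hnil. destruct Hlam2 as [Hl [Hlp _]]. eapply E_ge_of_no_extension; eauto. }
  destruct (definable_over_params C m th Hth) as [b Hthb].
  exists b. apply E_ge_witness. eexists.
  apply (mixture_witness C _ n m p nu1 nu2 lam1 lam2 om1 om2 r s th); auto; lra.
Qed.

End Extension.

Lemma ultrafilter_extension (X : Type) (x0 : X) (F : (X -> Prop) -> Prop) :
  (forall D E, F D -> F E -> F (fun x => D x /\ E x)) ->
  (forall D, F D -> exists x, D x) ->
  exists G : (X -> Prop) -> Prop,
    (forall D, F D -> G D) /\ G (fun _ => True) /\
    (forall P, G P -> exists x, P x) /\
    (forall P Q, G P -> G Q -> G (fun x => P x /\ Q x)) /\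
    (forall P Q, G P -> (forall x, P x -> Q x) -> G Q) /\
    (forall P, G P \/ G (fun x => ~ P x)).
Proof.
  intros HI HN.
  set (G0 := fun P : X -> Prop => (forall x, P x) \/ exists D, F D /\ forall x, D x -> P x).
  assert (PF : filter.ProperFilter G0).
  { constructor.
    - intros [H|[D [HD HDP]]]; [exact (H x0)|].
      destruct (HN D HD) as [x Hx]. exact (HDP x Hx).
    - constructor.
      + left. intros x. exact I.
      + intros P Q [HP|[D [HD HDP]]] [HQ|[E [HE HEQ]]].
        * left. intros x. split; auto.
        * right. exists E. split; auto. intros x Hx. split; auto.
        * right. exists D. split; auto. intros x Hx. split; auto.
        * right. exists (fun x => D x /\ E x). split; auto. intros x [Hx1 Hx2]. split; auto.
      + intros P Q HPQ [HP|[D [HD HDP]]].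
        * left. intros x. apply HPQ, HP.
        * right. exists D. split; auto. }
  destruct (filter.ultraFilterLemma PF) as [G [GU sub]].
  assert (GP : filter.ProperFilter G) by (apply filter.ultra_proper).
  assert (GF : filter.Filter G) by (apply filter.filter_filter).
  exists G. split; [|split; [|split; [|split; [|split]]]].
  - intros D HD. apply sub. right. exists D. split; auto.
  - apply (@filter.filterT _ _ GF).
  - intros P HP. apply NNPP. intro Hn. apply (@filter.filter_not_empty _ G GP).
    apply (@filter.filterS _ _ GF P); auto. intros x Hx. apply Hn. exists x; auto.
  - intros P Q HP HQ. apply (@filter.filterI _ _ GF); auto.
  - intros P Q HP HPQ. apply (@filter.filterS _ _ GF P); auto.
  - intros P. apply (filter.in_ultra_setVsetC P GU).
Qed.

Section Types.
Context {L : Language} {U : Structure L}.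

Lemma ultrafilter_trace_type m (G : ((nat -> U) -> Prop) -> Prop) :
  G (fun _ => True) -> (forall P, G P -> exists x, P x) ->
  (forall P Q, G P -> G Q -> G (fun x => P x /\ Q x)) ->
  (forall P Q, G P -> (forall x, P x -> Q x) -> G Q) ->
  (forall P, G P \/ G (fun x => ~ P x)) ->
  is_type (fullset U) m (fun D => G D /\ definable (fullset U) m D).
Proof.
  intros GT Gne GI GS GC. split; [|split; [|split; [|split; [|split]]]].
  - intros D [_ H]; auto.
  - split; auto. apply definable_true.
  - intros D [H _]; auto.
  - intros D E [H1 H2] [H3 H4]; split; auto. apply definable_and; auto.
  - intros D E [H1 H2] HE HDE; split; eauto.
  - intros D HD. destruct (GC D); [left|right]; split; auto. apply definable_not; auto.
Qed.

Lemma filter_positive m nu (G : ((nat -> U) -> Prop) -> Prop) D :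
  is_measure (fullset U) m nu ->
  (forall P Q, G P -> G Q -> G (fun x => P x /\ Q x)) -> (forall P, G P -> exists x, P x) ->
  (forall X, definable (fullset U) m X -> nu X = 0 -> G (fun a => ~ X a)) ->
  G D -> definable (fullset U) m D -> 0 < nu D.
Proof.
  intros Hnu GI Gne Hnull GD HD.
  destruct (Rle_lt_or_eq_dec 0 (nu D) (measure_ge0 Hnu D HD)) as [|H0]; auto. exfalso.
  destruct (Gne _ (GI _ _ GD (Hnull D HD (eq_sym H0)))) as [a [Ha1 Ha2]]. auto.
Qed.

(* The sets [t1 /\ t2] with [nu1 t1 = 1] and [nu2 t2 = 1] form a filter base; without a
   separating formula none of them is empty, and an ultrafilter through them is a type
   in both supports. *)
Lemma disjoint_supports_separated m nu1 nu2 :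
  is_measure (fullset U) m nu1 -> is_measure (fullset U) m nu2 ->
  ~ (exists q, in_supp m nu1 q /\ in_supp m nu2 q) ->
  exists th, definable (fullset U) m th /\ nu1 th = 1 /\ nu2 th = 0.
Proof.
  intros Hn1 Hn2 Hsupp. apply NNPP; intro Hno. apply Hsupp.
  destruct (dom_inh _ U) as [u].
  set (F := fun X : (nat -> U) -> Prop => exists t1 t2,
             definable (fullset U) m t1 /\ definable (fullset U) m t2 /\
             nu1 t1 = 1 /\ nu2 t2 = 1 /\ forall a, X a <-> t1 a /\ t2 a).
  destruct (ultrafilter_extension (nat -> U) (fun _ => u) F) as [G [GF [GT [Gne [GI [GS GC]]]]]].
  - intros X Y [t1 [t2 [D1 [D2 [N1 [N2 HX]]]]]] [t1' [t2' [D1' [D2' [N1' [N2' HY]]]]]].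
    exists (fun a => t1 a /\ t1' a), (fun a => t2 a /\ t2' a).
    split; [apply definable_and; auto|]. split; [apply definable_and; auto|].
    split; [rewrite (measure_and_full Hn1); auto|]. split; [rewrite (measure_and_full Hn2); auto|].
    intros a. rewrite HX, HY. tauto.
  - intros X [t1 [t2 [D1 [D2 [N1 [N2 HX]]]]]]. apply NNPP; intro Hne. apply Hno.
    exists t1. split; [auto|split; [auto|]].
    assert (nu2 t1 <= nu2 (fun a => ~ t2 a)).
    { apply (measure_mono Hn2); auto; [apply definable_not; auto|].
      intros a H1 H2. apply Hne. exists a. apply HX. auto. }
    rewrite (measure_compl Hn2) in H; auto.
    assert (0 <= nu2 t1) by (apply (measure_ge0 Hn2); auto). lra.
  - assert (Hnull : forall D, definable (fullset U) m D ->
                      nu1 D = 0 \/ nu2 D = 0 -> G (fun a => ~ D a)).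
    { intros D HD [H0|H0]; apply GF.
      - exists (fun a => ~ D a), (fun _ => True).
        split; [apply definable_not; auto|]. split; [apply definable_true|].
        split; [rewrite (measure_compl Hn1); auto; lra|]. split; [apply (measure_T Hn2)|].
        tauto.
      - exists (fun _ => True), (fun a => ~ D a).
        split; [apply definable_true|]. split; [apply definable_not; auto|].
        split; [apply (measure_T Hn1)|]. split; [rewrite (measure_compl Hn2); auto; lra|].
        tauto. }
    exists (fun D => G D /\ definable (fullset U) m D).
    pose proof (ultrafilter_trace_type m G GT Gne GI GS GC) as Hq.
    split; split; auto; intros D [GD HD]; apply (filter_positive m _ G); auto;
      intros X HX H0; apply Hnull; auto.
Qed.

Lemma dirac_agree_of_type_incl (A : U -> Prop) n m p r :
  is_type (fullset U) n p -> is_type A (n + m) r ->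
  (forall D, definable A n D -> p D -> r D) -> meas_eq_on A n (dirac r) (dirac p).
Proof.
  intros Hp Hr Hpr D HD. destruct (classic (p D)) as [pD|npD].
  - rewrite !dirac_in; auto.
  - rewrite !dirac_notin; auto. intros rD.
    destruct Hp as [_ [_ [_ [_ [_ P6]]]]].
    destruct (P6 D (definable_full HD)) as [|pnD]; [contradiction|].
    exact (type_consistent Hr rD (Hpr _ (definable_not HD) pnD)).
Qed.

Lemma pi_y_dirac_of_full n m om q :
  is_measure (fullset U) (n + m) om -> is_type (fullset U) m q ->
  (forall E, q E -> om (shift n E) = 1) -> meas_eq_on (fullset U) m (pi_y n om) (dirac q).
Proof.
  intros Hom Hq Hfull E HE. unfold pi_y.
  destruct (classic (q E)) as [qE|nqE]; [rewrite dirac_in; auto|rewrite dirac_notin; auto].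
  destruct Hq as [_ [_ [_ [_ [_ T6]]]]].
  destruct (T6 E HE) as [|qnE]; [contradiction|].
  pose proof (Hfull _ qnE) as H1.
  assert (HEs : definable (fullset U) (n + m) (shift n E)) by exact (definable_shift n HE).
  rewrite (measure_ext Hom (shift n (fun a => ~ E a)) (fun a => ~ shift n E a)),
    (measure_compl Hom) in H1 by (try apply definable_shift, definable_not; auto; reflexivity).
  lra.
Qed.

Lemma E_ge_dirac_of_implied (A C : U -> Prop) n m p q r om :
  (forall u, A u -> C u) ->
  is_type (fullset U) n p -> is_type (fullset U) m q -> is_type A (n + m) r ->
  (forall E, q E -> exists D F, p D /\ r F /\ forall v, D v -> F v -> shift n E v) ->
  joint_extension A n m (dirac r) (dirac p) om -> E_ge C n m (dirac p) (dirac q).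
Proof.
  intros HAC Hp Hq Hr Hqr [Hom [Hext Hm]]. exists om. split; [|split].
  - apply measure_of_full; auto.
  - intros D HD; apply Hm; exact (definable_full HD).
  - intros om' Hom' Hext' Hm'. apply pi_y_dirac_of_full; auto.
    intros E qE. destruct (Hqr E qE) as [D [F [pD [rF Hinc]]]].
    assert (HF : definable A (n + m) F) by (apply Hr; auto).
    apply (measure_full_of_and Hom' D F); auto.
    + apply definable_lift, Hp; auto.
    + exact (definable_full HF).
    + apply definable_shift, Hq; auto.
    + rewrite Hm'; [apply dirac_in; auto|apply Hp; auto].
    + rewrite Hext', Hext; [apply dirac_in; auto|auto|exact (definable_mono HAC HF)].
Qed.

Lemma types_separated m q1 q2 :
  is_type (fullset U) m q1 -> is_type (fullset U) m q2 ->
  ~ (forall E, definable (fullset U) m E -> (q1 E <-> q2 E)) ->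
  exists X, definable (fullset U) m X /\ q1 X /\ q2 (fun a => ~ X a).
Proof.
  intros Hq1 Hq2 Hneq. apply NNPP; intro Hno. apply Hneq. intros E HE.
  pose proof Hq1 as [_ [_ [_ [_ [A5 A6]]]]]. pose proof Hq2 as [_ [_ [_ [_ [B5 B6]]]]].
  split; intros H.
  - destruct (B6 E HE) as [|Hn]; auto. exfalso. apply Hno. exists E. auto.
  - destruct (A6 E HE) as [|Hn]; auto. exfalso. apply Hno. exists (fun a => ~ E a).
    split; [apply definable_not; auto|]. split; auto.
    apply (B5 E); [auto|apply definable_not, definable_not; auto|intros a Ha Hb; auto].
Qed.

Lemma types_separated_fin m (q : nat -> ((nat -> U) -> Prop) -> Prop) q' k :
  (forall j, (j < k)%nat -> is_type (fullset U) m (q j)) -> is_type (fullset U) m q' ->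
  (forall j, (j < k)%nat -> exists X, definable (fullset U) m X /\ q j X /\ q' (fun a => ~ X a)) ->
  exists Y, definable (fullset U) m Y /\ (forall j, (j < k)%nat -> q j Y) /\ q' (fun a => ~ Y a).
Proof.
  intros Hq Hq'. pose proof Hq' as [_ [T2 [_ [T4 [T5 _]]]]].
  induction k as [|k IH]; intros H.
  - exists (fun _ => False). split; [apply definable_false|]. split; [intros; lia|].
    apply (T5 _ _ T2); [apply definable_not, definable_false|tauto].
  - destruct IH as [Y [HY [HqY HkY]]]; [intros; apply Hq; lia|intros; apply H; lia|].
    destruct (H k ltac:(lia)) as [X [HX [HqX HkX]]].
    exists (fun a => Y a \/ X a). split; [apply definable_or; auto|]. split.
    + intros j Hj. pose proof (Hq j Hj) as [_ [_ [_ [_ [Q5 _]]]]].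
      destruct (Nat.eq_dec j k) as [->|].
      * apply (Q5 X); [auto|apply definable_or; auto|intros a Ha; auto].
      * apply (Q5 Y); [apply HqY; lia|apply definable_or; auto|intros a Ha; auto].
    + apply (T5 _ _ (T4 _ _ HkY HkX)); [apply definable_not, definable_or; auto|tauto].
Qed.

End Types.

Lemma sumR_ext k f g : (forall i, (i < k)%nat -> f i = g i) -> sumR k f = sumR k g.
Proof. induction k; simpl; intros H; auto. rewrite IHk, H; auto. Qed.

Lemma sumR_scale k c f : sumR k (fun i => c * f i) = c * sumR k f.
Proof. induction k; simpl; [ring|]. rewrite IHk; ring. Qed.

Lemma sumR_le k f g : (forall i, (i < k)%nat -> f i <= g i) -> sumR k f <= sumR k g.
Proof.
  induction k; simpl; intros H; [lra|].
  pose proof (H k ltac:(lia)). pose proof (IHk ltac:(auto)). lra.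
Qed.

Lemma sumR_ge0 k f : (forall i, (i < k)%nat -> 0 <= f i) -> 0 <= sumR k f.
Proof.
  induction k; simpl; intros H; [lra|].
  pose proof (H k ltac:(lia)). pose proof (IHk ltac:(auto)). lra.
Qed.

Lemma sumR_upd k j c f : (j < k)%nat ->
  sumR k (fun i => if Nat.eqb i j then f i + c else f i) = sumR k f + c.
Proof.
  induction k; simpl; intros H; [lia|].
  destruct (Nat.eqb_spec k j).
  - subst. rewrite (sumR_ext _ _ f); [ring|]. intros i Hi. destruct (Nat.eqb_spec i j); auto; lia.
  - rewrite IHk; [ring|lia].
Qed.

Lemma sumR_merge k j w f : (j < k)%nat -> f k = f j ->
  sumR k (fun i => (if Nat.eqb i j then w i + w k else w i) * f i) =
  sumR (S k) (fun i => w i * f i).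
Proof.
  intros Hj Hf. simpl. rewrite <- (sumR_upd k j (w k * f k)) by auto.
  apply sumR_ext. intros i _. destruct (Nat.eqb_spec i j) as [->|]; [rewrite Hf|]; ring.
Qed.

Lemma sumR_null_weights k w f :
  (forall i, (i < k)%nat -> 0 <= w i) -> sumR k w = 0 ->
  (forall i, (i < k)%nat -> 0 <= f i <= 1) -> sumR k (fun i => w i * f i) = 0.
Proof.
  intros Hw Hsum Hf.
  assert (sumR k (fun i => w i * f i) <= sumR k w)
    by (apply sumR_le; intros i Hi; specialize (Hw i Hi); specialize (Hf i Hi); nra).
  assert (0 <= sumR k (fun i => w i * f i))
    by (apply sumR_ge0; intros i Hi; specialize (Hw i Hi); specialize (Hf i Hi); nra).
  lra.
Qed.

Lemma sumR_normalize k c w g : c <> 0 ->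
  c * sumR k (fun i => w i / c * g i) = sumR k (fun i => w i * g i).
Proof. intros Hc. rewrite <- sumR_scale. apply sumR_ext. intros i _. field. auto. Qed.

Lemma sumR_normalized k c w : c <> 0 -> sumR k w = c -> sumR k (fun i => w i / c) = 1.
Proof.
  intros Hc Hsum. apply (Rmult_eq_reg_l c); auto.
  rewrite (sumR_ext _ _ (fun i => w i / c * 1)) by (intros; ring).
  rewrite sumR_normalize, (sumR_ext _ _ w) by (auto; intros; ring). lra.
Qed.

Section DiracMixture.
Context {L : Language} {U : Structure L}.

Lemma E_ge_add_separated_dirac (A : U -> Prop) n m p nu q' t Y b1 :
  0 <= t <= 1 -> definable (fullset U) m Y -> nu Y = 1 -> q' (fun a => ~ Y a) ->
  is_type (fullset U) m q' ->
  E_ge (fun u => A u \/ In u b1) n m (dirac p) nu ->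
  (forall C : U -> Prop, (forall u, A u -> C u) -> E_ge C n m (dirac p) (dirac q')) ->
  exists b, E_ge (fun u => A u \/ In u b) n m (dirac p) (fun D => (1 - t) * nu D + t * dirac q' D).
Proof.
  intros Ht HY HnuY Hq'Y Hq' Hnu Hdq.
  assert (Hq'0 : dirac q' Y = 0)
    by (apply dirac_notin; intros q'Y; exact (type_consistent Hq' q'Y Hq'Y)).
  assert (Hdq1 : E_ge (fun u => A u \/ In u b1) n m (dirac p) (dirac q'))
    by (apply Hdq; intros u Hu; left; auto).
  destruct (E_ge_mixture (fun u => A u \/ In u b1) n m p nu (dirac q') (1 - t) t Y)
    as [b2 Hb2]; auto; try lra.
  exists (b1 ++ b2). eapply E_ge_params_ext; [|exact Hb2].
  intros u. rewrite in_app_iff. tauto.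
Qed.

(* Induction on the number of types: a type equal to an earlier one has its weight merged
   into that one; a new type is separated from the earlier ones by a single formula and
   added with [E_ge_add_separated_dirac]. *)
Lemma E_ge_dirac_mixture (A : U -> Prop) n m p (q : nat -> ((nat -> U) -> Prop) -> Prop) k w :
  (forall i, (i < k)%nat -> is_type (fullset U) m (q i)) ->
  (forall i, (i < k)%nat -> forall C : U -> Prop, (forall u, A u -> C u) ->
     E_ge C n m (dirac p) (dirac (q i))) ->
  (forall i, (i < k)%nat -> 0 <= w i) -> sumR k w = 1 ->
  exists b, E_ge (fun u => A u \/ In u b) n m (dirac p)
              (fun D => sumR k (fun i => w i * dirac (q i) D)).
Proof.
  revert w. induction k as [|k IH]; intros w Hq HE Hw Hsum; simpl in Hsum; [lra|].
  assert (Hwk := Hw k ltac:(lia)).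
  assert (Hnn : 0 <= sumR k w) by (apply sumR_ge0; intros; apply Hw; lia).
  destruct (Req_dec (w k) 1) as [wk1|wk1].
  { exists nil. eapply E_ge_target_ext; [|apply (HE k); [lia|simpl; tauto]].
    intros D _. simpl. rewrite sumR_null_weights, wk1; auto; [ring|lra|].
    intros; apply dirac_bounds. }
  destruct (classic (exists j, (j < k)%nat /\
                      forall E, definable (fullset U) m E -> (q j E <-> q k E)))
    as [[j [Hj Heq]]|Hnew].
  - destruct (IH (fun i => if Nat.eqb i j then w i + w k else w i)) as [b Hb]; auto.
    + intros i Hi. destruct (Nat.eqb i j); pose proof (Hw i ltac:(lia)); lra.
    + rewrite sumR_upd; auto.
    + exists b. eapply E_ge_target_ext; [|exact Hb]. intros D HD.
      rewrite (sumR_merge k j w (fun i => dirac (q i) D)); auto.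
      destruct (classic (q j D)) as [qj|nqj].
      * rewrite !dirac_in; auto. apply Heq; auto.
      * rewrite !dirac_notin; auto. rewrite <- Heq; auto.
  - destruct (types_separated_fin m q (q k) k) as [Y [HY [HqY HkY]]];
      [intros; apply Hq; lia|apply Hq; lia| |].
    { intros j Hj. apply types_separated; [apply Hq; lia|apply Hq; lia|].
      intros Heq. apply Hnew. exists j. auto. }
    assert (Hc : 1 - w k <> 0) by lra.
    assert (Hw1 : sumR k (fun i => w i / (1 - w k)) = 1) by (apply sumR_normalized; lra).
    destruct (IH (fun i => w i / (1 - w k))) as [b1 Hb1]; auto.
    { intros i Hi. pose proof (Hw i ltac:(lia)). apply Rmult_le_pos; auto.
      left; apply Rinv_0_lt_compat; lra. }
    destruct (E_ge_add_separated_dirac A n m p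
                (fun D => sumR k (fun i => w i / (1 - w k) * dirac (q i) D)) (q k) (w k) Y b1)
      as [b Hb]; auto; [lra| |].
    { rewrite (sumR_ext _ _ (fun i => w i / (1 - w k))); auto.
      intros i Hi. rewrite dirac_in by auto. ring. }
    exists b. eapply E_ge_target_ext; [|exact Hb]. intros D _. simpl.
    rewrite sumR_normalize by auto. ring.
Qed.

End DiracMixture.

(* The witness is a joint extension of [dirac r] and [dirac p] if there is one, and
   [dirac r] itself (vacuously) otherwise. *)
Lemma D_ge_E_ge_dirac {L : Language} {U : Structure L} (A : U -> Prop) n m p q :
  is_type (fullset U) n p -> is_type (fullset U) m q -> D_ge A n m p q ->
  (forall C : U -> Prop, (forall u, A u -> C u) -> E_ge C n m (dirac p) (dirac q)) \/
  (forall nu, E_ge A n m (dirac p) nu).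
Proof.
  intros Hp Hq [r [Hr [Hpr Hqr]]].
  destruct (classic (exists om, joint_extension A n m (dirac r) (dirac p) om)) as [[om Hom]|Hno].
  - left. intros C HAC. eapply E_ge_dirac_of_implied; eauto.
  - right. intros nu. eapply E_ge_of_no_extension; eauto.
    + apply type_measure; auto.
    + apply (dirac_agree_of_type_incl A n m); auto.
Qed.

Theorem corollary5p10 (L : Language) (T : formula L -> Prop) (U : Structure L)
  (K : Type) (A : U -> Prop) :
  monster T U K -> small K A ->
  (forall (n m : nat) (r s : R) (p : ((nat -> U) -> Prop) -> Prop)
     (nu1 nu2 : ((nat -> U) -> Prop) -> R),
     0 <= r -> 0 <= s -> r + s = 1 ->
     is_type (fullset U) n p ->
     is_measure (fullset U) m nu1 -> is_measure (fullset U) m nu2 ->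
     ~ (exists q, in_supp m nu1 q /\ in_supp m nu2 q) ->
     E_ge A n m (dirac p) nu1 -> E_ge A n m (dirac p) nu2 ->
     exists b : list U,
       E_ge (fun u => A u \/ In u b) n m (dirac p)
            (fun D => r * nu1 D + s * nu2 D))
  /\
  (forall (n m k : nat) (p : ((nat -> U) -> Prop) -> Prop)
     (q : nat -> ((nat -> U) -> Prop) -> Prop) (w : nat -> R),
     is_type (fullset U) n p ->
     (forall i, (i < k)%nat -> is_type (fullset U) m (q i)) ->
     (forall i, (i < k)%nat -> D_ge A n m p (q i)) ->
     (forall i, (i < k)%nat -> 0 <= w i) -> sumR k w = 1 ->
     exists b : list U,
       E_ge (fun u => A u \/ In u b) n m (dirac p)
            (fun D => sumR k (fun i => w i * dirac (q i) D))).
Proof.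
  intros _ _. split.
  - intros n m r s p nu1 nu2 Hr Hs Hrs _ Hn1 Hn2 Hsupp HE1 HE2.
    destruct (disjoint_supports_separated m nu1 nu2 Hn1 Hn2 Hsupp) as [th [Hth [Hth1 Hth2]]].
    eapply E_ge_mixture; eauto.
  - intros n m k p q w Hp Hq HD Hw Hsum.
    destruct (classic (exists i, (i < k)%nat /\ forall nu, E_ge A n m (dirac p) nu))
      as [[i [_ Hvac]]|Hnvac].
    + exists nil. eapply E_ge_params_ext; [|apply Hvac]. simpl; tauto.
    + apply (E_ge_dirac_mixture A n m p q k w); auto.
      intros i Hi. destruct (D_ge_E_ge_dirac A n m p (q i)) as [Hall|Hvac]; auto.
      exfalso. apply Hnvac. exists i. auto.
Qed.
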